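(* Let $K$ be a circle of radius $1$ and centre $O$, and let $P$ be a point with $d=\mathrm{dist}(P,K)$ satisfying $0<d<1/2$. Let $Q\in K$ be such that the triangle $POQ$ is positively (counter-clockwise) oriented. (i) If $P$ is in the interior of $K$ and $|PQ|\ge 2\sqrt d$, then there is an angle $0<\alpha<\pi/2$ with $\sin\alpha<2\sqrt d$ such that the circle $K'$ obtained by rotating $K$ about $Q$ in the positive direction by angle $\alpha$ contains $P$. (ii) If $P$ is in the exterior of $K$ and $3\sqrt d\le |PQ|\le 2-d$, then there is an angle $0<\alpha<\pi/2$ with $\sin\alpha<2\sqrt d$ such that the circle $K'$ obtained by rotating $K$ about $Q$ in the negative direction by angle $\alpha$ contains $P$. Moreover, in both cases the distance between $O$ and the centre of $K'$ is less than $4\sqrt d$.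
   Context: $|AB|$ denotes the Euclidean distance between points $A,B$. The positive direction of rotation is counter-clockwise. *)

From Stdlib Require Import Reals.
Open Scope R_scope.

Definition pt : Type := (R * R)%type.

Definition edist (A B : pt) : R :=
  sqrt ((fst B - fst A)^2 + (snd B - snd A)^2).

Definition dist_to_circle (C : pt) (r : R) (P : pt) : R :=
  Rabs (edist C P - r).

(* Signed orientation (twice the signed area) of triangle ABC;
   positive iff A, B, C are in counter-clockwise order. *)
Definition orient (A B C : pt) : R :=
  (fst B - fst A) * (snd C - snd A) - (snd B - snd A) * (fst C - fst A).

Definition rot (Q : pt) (t : R) (X : pt) : pt :=
  (fst Q + cos t * (fst X - fst Q) - sin t * (snd X - snd Q),
   snd Q + sin t * (fst X - fst Q) + cos t * (snd X - snd Q)).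

From Stdlib Require Import Reals Rgeom Lra Psatz.
Open Scope R_scope.

(** Put [w = O - Q] and [a = P - Q].  Rotating [K] about [Q] by [t] moves its
   centre to [Q + R_t w], and [K'] passes through [P] iff this centre is one of
   the two points [Q + a/2 +- k a^perp], [k = sqrt (4 - |a|^2) / (2 |a|)], at
   distance 1 from both [Q] and [P].  For the [+] point, the coordinates in the
   frame [(w, w^perp)] are [cos t = D/2 + k Y] and [sin t = k D - Y/2], where
   [D = a.w > 0] (the angle [OQP] is acute) and [Y = orient Q P O > 0].  Then
   [sin t] has the sign of [1 - |OP|], so the rotation is positive for inner [P]
   and negative for outer [P]; moreover
   [4 |a|^2 sin t ^2 <= |(1 - |OP|^2) (1 - |OP|^2 + 2 |a|^2)|], which is
   [O(d |a|^2)], and the centre moves by at most [sqrt 2 |sin t|]. *)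

Definition dot_at (Q A B : pt) : R :=
  (fst A - fst Q) * (fst B - fst Q) + (snd A - snd Q) * (snd B - snd Q).

Lemma dot_at_comm (Q A B : pt) : dot_at Q A B = dot_at Q B A.
Proof. unfold dot_at; ring. Qed.

Lemma law_of_cosines (Q A B : pt) :
  dot_at A B B = dot_at Q A A + dot_at Q B B - 2 * dot_at Q A B.
Proof. unfold dot_at; ring. Qed.

Lemma dot_at_sqr_add_orient_sqr (Q A B : pt) :
  dot_at Q A B ^ 2 + orient Q A B ^ 2 = dot_at Q A A * dot_at Q B B.
Proof. unfold dot_at, orient; ring. Qed.

Lemma orient_cycle (A B C : pt) : orient A B C = orient B C A.
Proof. unfold orient; ring. Qed.

Lemma dot_at_rot (Q P X : pt) (t : R) :
  dot_at Q P (rot Q t X) = cos t * dot_at Q P X - sin t * orient Q P X.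
Proof. unfold dot_at, orient, rot; simpl; ring. Qed.

Lemma dot_at_rot_rot (Q X : pt) (t : R) :
  dot_at Q (rot Q t X) (rot Q t X) = dot_at Q X X.
Proof.
  pose proof (sin2_cos2 t) as Hsc; unfold Rsqr in Hsc.
  rewrite <- (Rmult_1_l (dot_at Q X X)), <- Hsc.
  unfold dot_at, rot; simpl; ring.
Qed.

Lemma sqr_edist (A B : pt) : edist A B ^ 2 = dot_at A B B.
Proof.
  unfold edist, dot_at.
  rewrite pow2_sqrt by (apply Rplus_le_le_0_compat; apply pow2_ge_0); ring.
Qed.

Lemma edist_nonneg (A B : pt) : 0 <= edist A B.
Proof. apply sqrt_pos. Qed.

Lemma edist_comm (A B : pt) : edist A B = edist B A.
Proof. unfold edist; f_equal; ring. Qed.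

Lemma edist_triangle (A B C : pt) : edist A C <= edist A B + edist B C.
Proof.
  assert (Heuc : forall X Y : pt, edist X Y = dist_euc (fst Y) (snd Y) (fst X) (snd X)).
  { intros X Y; unfold edist, dist_euc, Rsqr; f_equal; ring. }
  rewrite !Heuc, (Rplus_comm (dist_euc _ _ _ _)); apply triangle.
Qed.

Lemma edist_rot_center_sqr_le (Q X : pt) (t : R) :
  edist Q X = 1 -> 0 <= cos t -> edist X (rot Q t X) ^ 2 <= 2 * sin t ^ 2.
Proof.
  intros HQX Hcos.
  assert (HX : dot_at Q X X = 1) by (rewrite <- sqr_edist, HQX; ring).
  rewrite sqr_edist, (law_of_cosines Q), dot_at_rot_rot, dot_at_rot, HX.
  replace (orient Q X X) with 0 by (unfold orient; ring).
  pose proof (sin2_cos2 t) as Hsc; unfold Rsqr in Hsc.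
  pose proof (COS_bound t); nra.
Qed.

Section ChordAlgebra.

Variables D Y c k u v : R.
Hypotheses (DY_norm : D ^ 2 + Y ^ 2 = c ^ 2) (k_def : 4 * k ^ 2 * c ^ 2 = 4 - c ^ 2)
  (u_def : u = D / 2 + k * Y) (v_def : v = k * D - Y / 2).

Lemma chord_unit : u ^ 2 + v ^ 2 = 1.
Proof. subst u v; nra. Qed.

Lemma chord_eq : u * D - v * Y = c ^ 2 / 2.
Proof. subst u v; nra. Qed.

Lemma chord_sin_mul : 4 * c ^ 2 * v * (k * D + Y / 2) = 4 * D ^ 2 - c ^ 4.
Proof. subst v; nra. Qed.

Hypotheses (D_pos : 0 < D) (Y_pos : 0 < Y) (k_pos : 0 < k).

Lemma chord_cos_pos : 0 < u.
Proof. subst u; nra. Qed.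

Lemma chord_sum_pos : 0 < k * D + Y / 2.
Proof. pose proof (Rmult_lt_0_compat k D k_pos D_pos); lra. Qed.

(* [|v| <= kD + Y/2], since the two differences are [Y] and [2kD]. *)
Lemma chord_sin_sqr_le : 4 * c ^ 2 * v ^ 2 <= Rabs (4 * D ^ 2 - c ^ 4).
Proof.
  rewrite <- chord_sin_mul.
  assert (Hup : v <= k * D + Y / 2) by (subst v; nra).
  assert (Hlow : - v <= k * D + Y / 2) by (subst v; nra).
  assert (Hc : 0 <= c ^ 2) by apply pow2_ge_0.
  destruct (Rle_or_lt 0 v) as [Hv | Hv].
  - assert (0 <= v * (k * D + Y / 2 - v)) by (apply Rmult_le_pos; lra).
    rewrite Rabs_right; nra.
  - assert (0 <= - v * (k * D + Y / 2 + v)) by (apply Rmult_le_pos; lra).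
    rewrite Rabs_left; nra.
Qed.

Lemma chord_sin_pos : c ^ 2 < 2 * D -> 0 < v.
Proof.
  intros Hc; pose proof chord_sin_mul as Hv.
  assert (0 <= 4 * c ^ 2 * (k * D + Y / 2))
    by (pose proof chord_sum_pos; pose proof (pow2_ge_0 c); nra).
  assert (0 < 4 * D ^ 2 - c ^ 4) by nra.
  destruct (Rle_or_lt v 0); nra.
Qed.

Lemma chord_sin_neg : 2 * D < c ^ 2 -> v < 0.
Proof.
  intros Hc; pose proof chord_sin_mul as Hv.
  assert (0 <= 4 * c ^ 2 * (k * D + Y / 2))
    by (pose proof chord_sum_pos; pose proof (pow2_ge_0 c); nra).
  assert (4 * D ^ 2 - c ^ 4 < 0) by nra.
  destruct (Rle_or_lt 0 v); nra.
Qed.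

End ChordAlgebra.

Lemma exists_angle_of_cos_sin (u v : R) :
  0 < u -> u ^ 2 + v ^ 2 = 1 ->
  exists t, - (PI / 2) < t < PI / 2 /\ cos t = u /\ sin t = v.
Proof.
  intros Hu Huv.
  assert (Hv : -1 < v < 1) by nra.
  exists (asin v); split; [apply asin_bound_lt; lra|split].
  - rewrite cos_asin by lra.
    replace (1 - v²) with (u ^ 2) by (unfold Rsqr; lra).
    apply sqrt_pow2; lra.
  - apply sin_asin; lra.
Qed.

Lemma pos_of_sin_pos (t : R) : - (PI / 2) < t -> 0 < sin t -> 0 < t.
Proof.
  intros Ht Hs.
  destruct (Rtotal_order t 0) as [Hneg | [H0 | Hpos]]; auto.
  - pose proof PI_RGT_0; pose proof (sin_lt_0_var t); lra.
  - subst t; rewrite sin_0 in Hs; lra.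
Qed.

Lemma exists_rotation_through (O P Q : pt) :
  edist Q O = 1 -> 0 < orient Q P O -> 0 < edist Q P < 2 ->
  edist O P ^ 2 < 1 + edist Q P ^ 2 ->
  exists t, - (PI / 2) < t < PI / 2 /\ 0 < cos t /\ edist (rot Q t O) P = 1 /\
    4 * edist Q P ^ 2 * sin t ^ 2 <=
      Rabs ((1 - edist O P ^ 2) * (1 - edist O P ^ 2 + 2 * edist Q P ^ 2)) /\
    (edist O P < 1 -> 0 < sin t) /\ (1 < edist O P -> sin t < 0).
Proof.
  intros HQO HY Hc HL.
  set (c := edist Q P) in *; set (L := edist O P) in *.
  set (D := dot_at Q P O); set (Y := orient Q P O) in *.
  assert (HO : dot_at Q O O = 1) by (rewrite <- sqr_edist, HQO; ring).
  assert (HDY : D ^ 2 + Y ^ 2 = c ^ 2).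
  { unfold D, Y, c; rewrite dot_at_sqr_add_orient_sqr, sqr_edist, HO; ring. }
  assert (HLD : L ^ 2 = 1 + c ^ 2 - 2 * D).
  { unfold L, c, D; rewrite !sqr_edist, (law_of_cosines Q), HO, (dot_at_comm Q O P); ring. }
  assert (HL0 : 0 <= L) by apply edist_nonneg.
  set (k := sqrt (4 - c ^ 2) / (2 * c)).
  assert (Hk : 4 * k ^ 2 * c ^ 2 = 4 - c ^ 2).
  { unfold k; rewrite <- (pow2_sqrt (4 - c ^ 2)) at 2 by nra; field; lra. }
  assert (Hk0 : 0 < k) by (apply Rdiv_lt_0_compat; [apply sqrt_lt_R0; nra | lra]).
  assert (HD : 0 < D) by lra.
  set (u := D / 2 + k * Y); set (v := k * D - Y / 2).
  assert (Hu : 0 < u) by (apply (chord_cos_pos D Y k); auto).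
  destruct (exists_angle_of_cos_sin u v Hu) as (t & Ht & Hcos & Hsin).
  { apply (chord_unit D Y c k); auto. }
  exists t; rewrite Hcos, Hsin; repeat split; try lra.
  - assert (Hsq : edist (rot Q t O) P ^ 2 = 1).
    { rewrite sqr_edist, (law_of_cosines Q), dot_at_rot_rot, HO.
      rewrite (dot_at_comm Q (rot Q t O) P), dot_at_rot, Hcos, Hsin.
      fold D Y; rewrite (chord_eq D Y c k u v) by auto.
      replace (dot_at Q P P) with (c ^ 2) by (unfold c; apply sqr_edist); field. }
    pose proof (edist_nonneg (rot Q t O) P); nra.
  - replace ((1 - L ^ 2) * (1 - L ^ 2 + 2 * c ^ 2)) with (4 * D ^ 2 - c ^ 4) by nra.
    apply (chord_sin_sqr_le D Y c k); auto.
  - intros; apply (chord_sin_pos D Y c k); auto; nra.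
  - intros; apply (chord_sin_neg D Y c k); auto; nra.
Qed.

Lemma small_rotation_bounds (O Q : pt) (t d : R) :
  edist Q O = 1 -> 0 < cos t -> sin t ^ 2 < 4 * d ->
  Rabs (sin t) < 2 * sqrt d /\ edist O (rot Q t O) < 4 * sqrt d.
Proof.
  intros HQO Hcos Hsin.
  assert (Hd : 0 < d) by (pose proof (pow2_ge_0 (sin t)); lra).
  pose proof (pow2_sqrt d) as Hsd; pose proof (sqrt_lt_R0 d Hd).
  pose proof (edist_rot_center_sqr_le Q O t HQO) as Hc.
  pose proof (edist_nonneg O (rot Q t O)); pose proof (Rabs_pos (sin t)).
  rewrite <- (pow2_abs (sin t)) in Hsin, Hc.
  split; nra.
Qed.

Lemma rotation_through_inner_point (O P Q : pt) (d : R) :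
  0 < d -> d < 1 / 2 -> edist O Q = 1 -> 0 < orient Q P O ->
  edist O P = 1 - d -> 2 * sqrt d <= edist P Q ->
  exists alpha, 0 < alpha /\ alpha < PI / 2 /\ sin alpha < 2 * sqrt d /\
    edist (rot Q alpha O) P = 1 /\ edist O (rot Q alpha O) < 4 * sqrt d.
Proof.
  intros Hd0 Hd1 HOQ HY HL Hc.
  rewrite edist_comm in HOQ, Hc.
  pose proof (pow2_sqrt d) as Hsd; pose proof (sqrt_lt_R0 d Hd0).
  assert (Hc02 : 0 < edist Q P < 2) by (pose proof (edist_triangle Q O P); lra).
  assert (Hacute : edist O P ^ 2 < 1 + edist Q P ^ 2) by (rewrite HL; nra).
  destruct (exists_rotation_through O P Q HOQ HY Hc02 Hacute)
    as (t & Ht & Hcos & HP & Hsin & Hpos & _).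
  set (c := edist Q P) in *.
  rewrite HL in Hsin, Hpos.
  assert (Hs : 0 < sin t) by (apply Hpos; lra).
  assert (Hc2 : 4 * d <= c ^ 2) by nra.
  assert (Hgap : 0 < 1 - (1 - d) ^ 2 < 2 * d) by nra.
  rewrite Rabs_right in Hsin by nra.
  assert (Hs2 : sin t ^ 2 < 4 * d) by nra.
  destruct (small_rotation_bounds O Q t d HOQ Hcos Hs2) as [Hsmall Hcenter].
  rewrite Rabs_right in Hsmall by lra.
  exists t; repeat split; auto; try lra.
  apply pos_of_sin_pos; lra.
Qed.

Lemma rotation_through_outer_point (O P Q : pt) (d : R) :
  0 < d -> d < 1 / 2 -> edist O Q = 1 -> 0 < orient Q P O ->
  edist O P = 1 + d -> 3 * sqrt d <= edist P Q -> edist P Q <= 2 - d ->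
  exists alpha, 0 < alpha /\ alpha < PI / 2 /\ sin alpha < 2 * sqrt d /\
    edist (rot Q (- alpha) O) P = 1 /\ edist O (rot Q (- alpha) O) < 4 * sqrt d.
Proof.
  intros Hd0 Hd1 HOQ HY HL Hc Hc'.
  rewrite edist_comm in HOQ, Hc, Hc'.
  pose proof (pow2_sqrt d) as Hsd; pose proof (sqrt_lt_R0 d Hd0).
  assert (Hc2 : 9 * d <= edist Q P ^ 2) by nra.
  assert (Hc02 : 0 < edist Q P < 2) by nra.
  assert (Hacute : edist O P ^ 2 < 1 + edist Q P ^ 2) by (rewrite HL; nra).
  destruct (exists_rotation_through O P Q HOQ HY Hc02 Hacute)
    as (t & Ht & Hcos & HP & Hsin & _ & Hneg).
  set (c := edist Q P) in *.
  rewrite HL in Hsin, Hneg.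
  assert (Hs : sin t < 0) by (apply Hneg; lra).
  assert (Hgap : 0 < (1 + d) ^ 2 - 1 < 3 * d) by nra.
  rewrite Rabs_left in Hsin by nra.
  assert (Hs2 : sin t ^ 2 < 4 * d) by nra.
  destruct (small_rotation_bounds O Q t d HOQ Hcos Hs2) as [Hsmall Hcenter].
  rewrite Rabs_left in Hsmall by lra.
  exists (- t); rewrite Ropp_involutive, sin_neg; repeat split; auto; try lra.
  apply pos_of_sin_pos; rewrite ?sin_neg; lra.
Qed.

Theorem lemma1 (O P Q : pt) :
  let d := dist_to_circle O 1 P in
  0 < d -> d < 1/2 ->
  edist O Q = 1 ->
  orient P O Q > 0 ->
  (edist O P < 1 -> edist P Q >= 2 * sqrt d ->
     exists alpha, 0 < alpha /\ alpha < PI/2 /\ sin alpha < 2 * sqrt d /\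
       edist (rot Q alpha O) P = 1 /\
       edist O (rot Q alpha O) < 4 * sqrt d) /\
  (edist O P > 1 -> 3 * sqrt d <= edist P Q -> edist P Q <= 2 - d ->
     exists alpha, 0 < alpha /\ alpha < PI/2 /\ sin alpha < 2 * sqrt d /\
       edist (rot Q (- alpha) O) P = 1 /\
       edist O (rot Q (- alpha) O) < 4 * sqrt d).
Proof.
  intros d Hd0 Hd1 HOQ HY.
  rewrite orient_cycle, orient_cycle in HY.
  unfold d, dist_to_circle in *; split.
  - intros HL Hc; rewrite Rabs_left in * by lra.
    apply rotation_through_inner_point; auto; lra.
  - intros HL Hc Hc'; rewrite Rabs_right in * by lra.
    apply rotation_through_outer_point; auto; lra.
Qed.
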